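(* There are universal constants $C,c>0$ such that the following holds. Let $p\in(0,1/2]$, let $y=(y_1,\dots,y_n)\in\mathbb{R}^n$, and let $L>0$, $\lambda\in\mathbb{R}$ be such that, for independent Bernoulli($p$) random variables $b_1,\dots,b_n$, $\mathbb{P}\{|\sum_{i=1}^nb_iy_i-\lambda|\leq t\}\leq Lt$ for all $t\geq\sqrt n$. Then there exists $y'=(y'_1,\dots,y'_n)\in\mathbb{Z}^n$ such that: (i) $\|y-y'\|_\infty\leq1$; (ii) $\mathbb{P}\{|\sum_{i=1}^nb_iy'_i-\lambda|\leq t\}\leq C\,Lt$ for all $t\geq\sqrt n$; (iii) $\mathcal L(\sum_{i=1}^nb_iy'_i,\sqrt n)\geq c\,\mathcal L(\sum_{i=1}^nb_iy_i,\sqrt n)$; (iv) $|\sum_{i=1}^ny_i-\sum_{i=1}^ny'_i|\leq C\sqrt n$.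
   Context: A Bernoulli($p$) random variable takes value $1$ with probability $p$ and $0$ with probability $1-p$. The Lévy concentration function is $\mathcal L(\xi,t)=\sup_{\lambda\in\mathbb{R}}\mathbb{P}\{|\xi-\lambda|\leq t\}$. *)

From HB Require Import structures.
From mathcomp Require Import all_boot all_order all_algebra.
From mathcomp Require Import boolp classical_sets reals.
From mathcomp Require Export Rstruct.
Set Implicit Arguments. Unset Strict Implicit. Unset Printing Implicit Defensive.
Import Order.TTheory GRing.Theory Num.Theory.
Local Open Scope ring_scope.
Local Open Scope classical_set_scope.

Section Defs.
Variable R : realType.

Definition bern_weight (p : R) (n : nat) (b : {ffun 'I_n -> bool}) : R :=
  \prod_(i < n) (if b i then p else 1 - p).

Definition rsum (n : nat) (y : 'I_n -> R) (b : {ffun 'I_n -> bool}) : R :=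
  \sum_(i < n) (b i)%:R * y i.

Definition prob_close (p : R) (n : nat) (y : 'I_n -> R) (lam t : R) : R :=
  \sum_(b : {ffun 'I_n -> bool} | `|rsum y b - lam| <= t) bern_weight p b.

Definition levy (p : R) (n : nat) (y : 'I_n -> R) (t : R) : R :=
  sup [set prob_close p y lam t | lam in [set: R]].
End Defs.

From HB Require Import structures.
From mathcomp Require Import all_boot all_order all_algebra.
From mathcomp Require Import boolp classical_sets reals Rstruct.
From mathcomp Require Import sequences exp lra ring.
Import Order.TTheory GRing.Theory Num.Theory.
Local Open Scope ring_scope.

Set Implicit Arguments. Unset Strict Implicit. Unset Printing Implicit Defensive.

(* Round every y_i independently, up with probability equal to its fractional
   part and down otherwise.  For a selection b, the rounding error
   D_b = sum_i b_i (y_i - y'_i) is a sum of independent centred terms bounded by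
   1, so E exp(|D_b| / (4 sqrt n)) <= 3.  Let r = sqrt n, let lam0 nearly attain
   L(sum_i b_i y_i, r), and let X be the probability that the rounded sum is
   within 33 r of lam0.  On average over the rounding, X is at least 2/3 of
   P{|sum_i b_i y_i - lam0| <= r}, whereas X * P{|sum_i b_i y_i - lam| <= 2 |D_b|}
   and X * exp(|D_1| / (16 r)) are small: bounding the indicators by
   exponentials separates an exponential moment of D from a layer-cake sum,
   controlled by the concentration function of sum_i b_i y_i and by the
   small-ball hypothesis respectively.  Some rounding does at least as well as
   the average of a suitable combination of the three: X is large, giving (iii),
   the total error D_1 is small, giving (iv), and so is the probability of
   |sum_i b_i y_i - lam| <= 2 |D_b|, which gives (ii) because
   |sum_i b_i y'_i - lam| <= t forces |sum_i b_i y_i - lam| <= 2 t or <= 2 |D_b|. *)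

Section BernoulliProduct.
Variables (R : realType) (n : nat).
Implicit Types (q : 'I_n -> R) (e : {ffun 'I_n -> bool}).

Definition bern_prod q e : R := \prod_(i < n) (if e i then q i else 1 - q i).

Lemma bern_prod_ge0 q e : (forall i, 0 <= q i <= 1) -> 0 <= bern_prod q e.
Proof.
by move=> hq; apply: prodr_ge0 => i _; have := hq i; case: (e i) => /andP[? ?]; lra.
Qed.

Lemma sum_bern_prod_prod q (g : 'I_n -> bool -> R) :
  \sum_e bern_prod q e * \prod_i g i (e i) =
  \prod_i (q i * g i true + (1 - q i) * g i false).
Proof.
have -> : \prod_i (q i * g i true + (1 - q i) * g i false) =
    \prod_i \sum_(x : bool) (if x then q i else 1 - q i) * g i x.
  by apply: eq_bigr => i _; rewrite big_bool.
rewrite bigA_distr_bigA; apply: eq_bigr => e _.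
by rewrite /bern_prod -big_split; apply: eq_bigr => i _; case: (e i).
Qed.

Lemma sum_bern_prod q : \sum_e bern_prod q e = 1.
Proof.
have := sum_bern_prod_prod q (fun _ _ => 1); rewrite /=.
under eq_bigr => e _ do rewrite big1_eq mulr1.
by move=> ->; apply: big1 => i _; rewrite !mulr1 addrC subrK.
Qed.

Lemma bern_weight_ge0 (p : R) e : 0 <= p <= 1 -> 0 <= bern_weight p e.
Proof. by move=> hp; exact: (bern_prod_ge0 e (fun _ => hp)). Qed.

Lemma sum_bern_weight (p : R) : \sum_(e : {ffun 'I_n -> bool}) bern_weight p e = 1.
Proof. exact: (sum_bern_prod (fun _ => p)). Qed.

End BernoulliProduct.

Section ExponentialBounds.
Variable R : realType.
Implicit Types x s q a b : R.

Lemma expR_le_quadratic x : `|x| <= 2^-1 -> expR x <= 1 + x + 2 * x ^+ 2.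
Proof.
rewrite ler_norml => /andP[x_ge x_le].
have inv_ge : 1 - x <= expR (- x) by have := expR_ge1Dx (- x); lra.
have : expR x <= (1 - x)^-1.
  by rewrite -[expR x]invrK -expRN lef_pV2 ?posrE ?expR_gt0 //; lra.
move=> /le_trans; apply; rewrite -[(1 - x)^-1]mul1r ler_pdivrMr; last lra.
have : 0 <= x ^+ 2 * (1 - 2 * x) by apply: mulr_ge0; [exact: sqr_ge0 | lra].
rewrite expr2; nra.
Qed.

Lemma centred_bernoulli_mgf_le q s : 0 <= q <= 1 -> `|s| <= 2^-1 ->
  q * expR (s * (q - 1)) + (1 - q) * expR (s * q) <= expR (2 * s ^+ 2).
Proof.
move=> /andP[q_ge0 q_le1] s_small.
have scaled_small a : `|a| <= 1 -> `|s * a| <= 2^-1.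
  by move=> a_le1; rewrite normrM; apply: le_trans s_small; rewrite ler_piMr.
have e1 : expR (s * (q - 1)) <= 1 + s * (q - 1) + 2 * (s * (q - 1)) ^+ 2.
  by apply/expR_le_quadratic/scaled_small; rewrite ler_norml; lra.
have e2 : expR (s * q) <= 1 + s * q + 2 * (s * q) ^+ 2.
  by apply/expR_le_quadratic/scaled_small; rewrite ler_norml; lra.
have q'_ge0 : 0 <= 1 - q by lra.
have m1 := ler_wpM2l q_ge0 e1.
have m2 := ler_wpM2l q'_ge0 e2.
have := expR_ge1Dx (2 * s ^+ 2).
have s2_ge0 : 0 <= s * s by rewrite -expr2 sqr_ge0.
have : q * (1 - q) * (s * s) <= s * s by nra.
rewrite !expr2 in m1 m2 *; nra.
Qed.

Lemma expR_norm_le x : expR `|x| <= expR x + expR (- x).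
Proof.
have := expR_ge0 x; have := expR_ge0 (- x).
by case: (lerP 0 x) => hx; [rewrite ger0_norm | rewrite ltr0_norm]; lra.
Qed.

Lemma expR_mul_le_mean a b : expR a * expR b <= (expR (2 * a) + expR (2 * b)) / 2.
Proof.
rewrite (expRM_natl 2 a) (expRM_natl 2 b) !expr2.
have := sqr_ge0 (expR a - expR b); rewrite expr2; lra.
Qed.

End ExponentialBounds.

Lemma sqrt_nat_ge1 (R : realType) n : (0 < n)%N -> 1 <= Num.sqrt n%:R :> R.
Proof. by move=> n_gt0; rewrite -[leLHS]sqrtr1 ler_sqrt ?ler1n. Qed.

Section RoundingError.
Variables (R : realType) (n : nat) (q : 'I_n -> R).
Hypothesis q01 : forall i, 0 <= q i <= 1.
Implicit Types (b e : {ffun 'I_n -> bool}) (s a c : R).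

Definition round_error e i : R := if e i then q i - 1 else q i.

Lemma norm_round_error_le1 e i : `|round_error e i| <= 1.
Proof.
by have := q01 i; rewrite /round_error ler_norml; case: (e i) => /andP[? ?]; apply/andP; lra.
Qed.

Definition round_error_sum b e : R := \sum_(i < n) (b i)%:R * round_error e i.

Lemma mgf_round_error_sum_le b s : `|s| <= 2^-1 ->
  \sum_e bern_prod q e * expR (s * round_error_sum b e) <= expR (2 * s ^+ 2 * n%:R).
Proof.
move=> s_small.
pose g i (x : bool) := expR (s * ((b i)%:R * (if x then q i - 1 else q i))).
under eq_bigr => e _ do
  rewrite /round_error_sum mulr_sumr expR_sum -[\prod_i _]/(\prod_i g i (e i)).
rewrite sum_bern_prod_prod expRM_natr -[n in _ ^+ n]card_ord -prodr_const.
apply: ler_prod => i _; have /andP[q_ge0 q_le1] := q01 i; apply/andP; split.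
  by apply: addr_ge0; apply: mulr_ge0; rewrite ?expR_ge0 ?subr_ge0.
rewrite /g; case: (b i); rewrite ?mul1r ?mul0r ?mulr0 ?expR0.
  exact: centred_bernoulli_mgf_le.
rewrite !mulr1 addrC subrK; apply: le_trans (expR_ge1Dx _).
by rewrite lerDl mulr_ge0 ?sqr_ge0.
Qed.

Lemma exp_abs_round_error_sum_le b : (0 < n)%N ->
  \sum_e bern_prod q e * expR ((4 * Num.sqrt n%:R)^-1 * `|round_error_sum b e|) <= 3.
Proof.
move=> n_gt0; set v := (4 * _)^-1.
have r_ge1 := sqrt_nat_ge1 R n_gt0.
have v_ge0 : 0 <= v by rewrite invr_ge0; lra.
have v_small : `|v| <= 2^-1 by rewrite ger0_norm // lef_pV2 ?posrE; lra.
have vN_small : `|- v| <= 2^-1 by rewrite normrN.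
have v2n : 2 * v ^+ 2 * n%:R = 8^-1.
  by rewrite -[n%:R]sqr_sqrtr ?ler0n // /v; field; rewrite gt_eqF //; lra.
apply: le_trans (_ : \sum_e bern_prod q e *
    (expR (v * round_error_sum b e) + expR (- v * round_error_sum b e)) <= _).
  apply: ler_sum => e _; apply: ler_wpM2l; first exact: bern_prod_ge0.
  by have := expR_norm_le (v * round_error_sum b e); rewrite normrM ger0_norm // mulNr.
under eq_bigr do rewrite mulrDr.
rewrite big_split /=.
have := mgf_round_error_sum_le b v_small; have := mgf_round_error_sum_le b vN_small.
have exp8_le : expR (8^-1 : R) <= 7 / 6.
  have small : `|8^-1 : R| <= 2^-1 by rewrite ger0_norm; lra.
  by apply: le_trans (expR_le_quadratic small) _; rewrite expr2; lra.
rewrite sqrrN v2n; lra.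
Qed.

Lemma exp_abs_round_error_sum2_le b b' a c : (0 < n)%N -> 0 <= a -> 0 <= c ->
  2 * a <= (4 * Num.sqrt n%:R)^-1 -> 2 * c <= (4 * Num.sqrt n%:R)^-1 ->
  \sum_e bern_prod q e *
    (expR (a * `|round_error_sum b e|) * expR (c * `|round_error_sum b' e|)) <= 3.
Proof.
move=> n_gt0 a_ge0 c_ge0 a_le c_le; set v := (4 * _)^-1 in a_le c_le *.
apply: le_trans (_ : \sum_e bern_prod q e * ((expR (v * `|round_error_sum b e|) +
    expR (v * `|round_error_sum b' e|)) / 2) <= _).
  apply: ler_sum => e _; apply: ler_wpM2l; first exact: bern_prod_ge0.
  apply: le_trans (expR_mul_le_mean _ _) _; rewrite ler_pM2r ?invr_gt0 //.
  by apply: lerD; rewrite ler_expR mulrA ler_wpM2r.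
under eq_bigr do rewrite mulrA mulrDr.
rewrite -mulr_suml big_split /=.
have := exp_abs_round_error_sum_le b n_gt0; have := exp_abs_round_error_sum_le b' n_gt0.
rewrite -/v; lra.
Qed.

End RoundingError.

Definition indicator {R : realType} (P : bool) : R := P%:R.

Lemma indicator_ge0 (R : realType) (P : bool) : 0 <= indicator P :> R.
Proof. exact: ler0n. Qed.

Lemma sum_indicator (R : realType) (T : finType) (P : pred T) (w : T -> R) :
  \sum_(x | P x) w x = \sum_x w x * indicator (P x).
Proof. by rewrite big_mkcond; apply: eq_bigr => x _; case: (P x); rewrite ?mulr1 ?mulr0. Qed.

Section LayerCake.
Variable R : realType.

Lemma sum_succ_geom_rem (rho : R) (N : nat) : rho != 1 ->
  \sum_(j < N) j.+1%:R * rho ^+ j +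
    rho ^+ N * (rho / (1 - rho) ^+ 2 + N.+1%:R / (1 - rho)) = ((1 - rho) ^+ 2)^-1.
Proof.
move=> rho_neq1; have rho'_neq0 : 1 - rho != 0 by rewrite subr_eq0 eq_sym.
elim: N => [|N IH]; first by rewrite big_ord0 add0r expr0 mul1r; field.
rewrite big_ord_recr /= -[in RHS]IH exprS -(addn1 N.+1) -(addn1 N) !natrD.
by field.
Qed.

Lemma expR_Ninv16_le : expR (- 16^-1) <= 16 / 17 :> R.
Proof.
rewrite expRN -[16 / 17]invf_div lef_pV2 ?posrE ?expR_gt0 //; last lra.
by have := expR_ge1Dx (16^-1 : R); lra.
Qed.

Lemma sum_succ_expR_geom_le (N : nat) :
  \sum_(j < N) j.+1%:R * expR (- 16^-1) ^+ j <= 289 :> R.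
Proof.
set rho := expR _; have rho_gt0 : 0 < rho by exact: expR_gt0.
have rho_le : rho <= 16 / 17 := expR_Ninv16_le.
have rho_neq1 : rho != 1 by apply/negP => /eqP rho1; rewrite rho1 in rho_le; lra.
have := sum_succ_geom_rem N rho_neq1.
have rem_ge0 : 0 <= rho ^+ N * (rho / (1 - rho) ^+ 2 + N.+1%:R / (1 - rho)).
  by rewrite mulr_ge0 ?exprn_ge0 ?addr_ge0 ?divr_ge0 ?exprn_ge0 //; lra.
have : ((1 - rho) ^+ 2)^-1 <= 289.
  rewrite -[X in X <= _]mul1r ler_pdivrMr ?exprn_gt0 ?subr_gt0 ?expr2; nra.
lra.
Qed.

Lemma layer_cake_expR_le (T : finType) (w z : T -> R) (r M : R) :
  (forall x, 0 <= w x) -> (forall x, 0 <= z x) -> 0 < r ->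
  (forall k : nat, \sum_(x | z x <= k.+1%:R * r) w x <= k.+1%:R * M) ->
  \sum_x w x * expR (- (z x / (16 * r))) <= 289 * M.
Proof.
move=> w_ge0 z_ge0 r_gt0 level_le.
set rho : R := expR (- 16^-1).
have M_ge0 : 0 <= M.
  by have := level_le 0%N; rewrite !mul1r; apply: le_trans; rewrite sumr_ge0.
pose k x := Num.truncn (z x / r).
pose N := (\sum_x k x).+1.
have exp_le_levels x : expR (- (z x / (16 * r))) <=
    \sum_(j < N) rho ^+ j * indicator (z x <= j.+1%:R * r).
  have kx_le : (k x)%:R <= z x / r by rewrite truncn_le divr_ge0 // ltW.
  have kx_gt : z x / r < (k x).+1%:R by exact: truncnS_gt.
  have kx_lt : (k x < N)%N by rewrite ltnS (bigD1 x) //= leq_addr.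
  have kx_level : z x <= (k x).+1%:R * r by rewrite -ler_pdivrMr // ltW.
  apply: le_trans (_ : rho ^+ k x <= _).
    have -> : z x / (16 * r) = z x / r / 16 by rewrite invfM mulrAC mulrA.
    rewrite /rho -expRM_natl ler_expR; lra.
  rewrite (bigD1 (Ordinal kx_lt)) //= /indicator kx_level mulr1 lerDl.
  apply: sumr_ge0 => j _.
  by rewrite mulr_ge0 ?indicator_ge0 ?exprn_ge0 ?expR_ge0.
apply: le_trans (_ : \sum_x w x *
    \sum_(j < N) rho ^+ j * indicator (z x <= j.+1%:R * r) <= _).
  by apply: ler_sum => x _; apply: ler_wpM2l.
under eq_bigr do rewrite mulr_sumr.
rewrite exchange_big /=.
apply: le_trans (_ : \sum_(j < N) rho ^+ j * (j.+1%:R * M) <= _).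
  apply: ler_sum => j _.
  have -> : \sum_x w x * (rho ^+ j * indicator (z x <= j.+1%:R * r)) =
            rho ^+ j * \sum_(x | z x <= j.+1%:R * r) w x.
    by rewrite sum_indicator mulr_sumr; apply: eq_bigr => x _; rewrite mulrCA.
  by rewrite ler_wpM2l ?exprn_ge0 ?expR_ge0.
have -> : \sum_(j < N) rho ^+ j * (j.+1%:R * M) =
          (\sum_(j < N) j.+1%:R * rho ^+ j) * M.
  by rewrite mulr_suml; apply: eq_bigr => j _; rewrite mulrCA mulrA.
by rewrite ler_wpM2r // sum_succ_expR_geom_le.
Qed.

End LayerCake.

Lemma sum_le_sum_union (R : realType) (T : finType) (P Q1 Q2 : pred T) (w : T -> R) :
  (forall x, 0 <= w x) -> (forall x, P x -> Q1 x || Q2 x) ->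
  \sum_(x | P x) w x <= \sum_(x | Q1 x) w x + \sum_(x | Q2 x) w x.
Proof.
move=> w_ge0 PQ; rewrite (sum_indicator P) (sum_indicator Q1) (sum_indicator Q2).
rewrite -big_split /=; apply: ler_sum => x _.
rewrite -mulrDr ler_wpM2l // /indicator -natrD ler_nat.
by case: (P x) (PQ x) => // /(_ isT); case: (Q1 x); case: (Q2 x).
Qed.

Section Concentration.
Variables (R : realType) (n : nat) (p : R) (y : 'I_n -> R).
Hypothesis p01 : 0 <= p <= 1.

Lemma prob_close_ge0 lam t : 0 <= prob_close p y lam t.
Proof. by apply: sumr_ge0 => b _; exact: bern_weight_ge0. Qed.

Lemma prob_close_le1 lam t : prob_close p y lam t <= 1.
Proof.
rewrite -(sum_bern_weight n p) [X in _ <= X](bigID (fun b => `|rsum y b - lam| <= t)).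
by rewrite lerDl sumr_ge0 // => b _; exact: bern_weight_ge0.
Qed.

Lemma has_sup_prob_close t : has_sup [set prob_close p y lam t | lam in [set: R]].
Proof.
split; first by exists (prob_close p y 0 t), 0.
by exists 1 => _ [lam _ <-]; exact: prob_close_le1.
Qed.

Lemma prob_close_le_levy lam t : prob_close p y lam t <= levy p y t.
Proof. by apply: (sup_upper_bound (has_sup_prob_close t)); exists lam. Qed.

Lemma prob_close_le_levy_mul lam t (k : nat) : 0 <= t ->
  prob_close p y lam (k.+1%:R * t) <= k.+1%:R * levy p y t.
Proof.
move=> t_ge0; elim: k lam => [|k IH] lam; first by rewrite !mul1r prob_close_le_levy.
apply: le_trans (_ : prob_close p y (lam - t) (k.+1%:R * t) +
    prob_close p y (lam + k.+1%:R * t) t <= _).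
  apply: sum_le_sum_union => [b|b]; first exact: bern_weight_ge0.
  rewrite -!natr1 !mulrDl !mul1r !ler_norml => /andP[lo hi].
  have kt_ge0 : 0 <= k%:R * t by rewrite mulr_ge0.
  by case: (lerP (rsum y b) (lam + k%:R * t)) => side; apply/orP;
    [left | right]; apply/andP; split; lra.
rewrite -[k.+2%:R]natr1 mulrDl mul1r.
by apply: lerD; [exact: IH | exact: prob_close_le_levy].
Qed.

Lemma levy_gt0 t : 0 < p < 1 -> 0 <= t -> 0 < levy p y t.
Proof.
move=> /andP[p_gt0 p_lt1] t_ge0; pose b0 : {ffun 'I_n -> bool} := [ffun => false].
apply: lt_le_trans (prob_close_le_levy (rsum y b0) t).
rewrite /prob_close (bigD1 b0) /=; last by rewrite subrr normr0.
apply: lt_le_trans (_ : 0 < bern_weight p b0) _.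
  by apply: prodr_gt0 => i _; rewrite ffunE subr_gt0.
by rewrite lerDl sumr_ge0 // => b _; exact: bern_weight_ge0.
Qed.

Lemma exists_prob_close_gt_half_levy t : 0 < levy p y t ->
  exists lam, levy p y t / 2 < prob_close p y lam t.
Proof.
move=> levy_pos; have half_gt0 : 0 < levy p y t / 2 by lra.
have [_ [lam _ <-] close_gt] := sup_adherent half_gt0 (has_sup_prob_close t).
by exists lam; move: close_gt; rewrite -/(levy p y t); lra.
Qed.

End Concentration.

Section Rounding.
Variables (R : realType) (n : nat) (y : 'I_n -> R).
Implicit Types (b e : {ffun 'I_n -> bool}).

Definition frac_part i : R := y i - (Num.floor (y i))%:~R.

Definition round_with e i : int := Num.floor (y i) + (e i : nat)%:Z.

Lemma frac_part_ge0_le1 i : 0 <= frac_part i <= 1.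
Proof.
have := floor_le (y i); have := floorD1_gt (y i); rewrite intrD /frac_part.
by move=> ? ?; apply/andP; lra.
Qed.

Lemma round_withE e i : (round_with e i)%:~R = y i - round_error frac_part e i.
Proof. by rewrite /round_with /round_error /frac_part intrD; case: (e i) => /=; lra. Qed.

Lemma rsum_round_with b e :
  rsum (fun i => (round_with e i)%:~R) b = rsum y b - round_error_sum frac_part b e.
Proof.
by rewrite /rsum /round_error_sum -sumrB; apply: eq_bigr => i _; rewrite round_withE; ring.
Qed.

Lemma sum_sub_round_with e :
  \sum_i y i - \sum_i (round_with e i)%:~R = round_error_sum frac_part [ffun => true] e.
Proof.
by rewrite /round_error_sum -sumrB; apply: eq_bigr => i _; rewrite round_withE ffunE /=; ring.
Qed.

End Rounding.

Section PointwiseBounds.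
Variable R : realType.
Implicit Types a B u S D l r : R.

Lemma indicator_le (P Q : bool) : (P -> Q) -> indicator P <= indicator Q :> R.
Proof. by rewrite /indicator ler_nat; case: P; case: Q => // /(_ isT). Qed.

Lemma indicator_le_expR a B u : 0 <= u -> indicator (a <= B) <= expR (u * (B - a)) :> R.
Proof.
move=> u_ge0; rewrite /indicator.
case: (lerP a B) => [a_le|_] /=; rewrite ?mulr1n ?mulr0n ?expR_ge0 //.
by apply: le_trans (expR_ge1Dx _); rewrite lerDl mulr_ge0 // subr_ge0.
Qed.

Lemma indicator_shifted_close_le S D l r : 0 < r ->
  indicator (`|S - D - l| <= 33 * r) <=
  expR (33 / 16) * expR (- (`|S - l| / (16 * r))) * expR ((16 * r)^-1 * `|D|).
Proof.
move=> r_gt0.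
apply: le_trans (_ : indicator (`|S - l| <= 33 * r + `|D|) <= _).
  apply: indicator_le => close.
  have : `|S - l| <= `|S - D - l| + `|D|.
    by rewrite (_ : S - l = S - D - l + D) ?ler_normD //; ring.
  lra.
have u_ge0 : 0 <= (16 * r)^-1 by rewrite invr_ge0; lra.
apply: le_trans (indicator_le_expR _ _ u_ge0) _.
by rewrite -!expRD le_eqVlt; apply/orP; left; apply/eqP; congr expR; field; lra.
Qed.

Lemma indicator_close_le_err S D l r : 0 < r ->
  indicator (`|S - l| <= 2 * `|D|) <=
  expR (- (`|S - l| / (16 * r))) * expR ((8 * r)^-1 * `|D|) :> R.
Proof.
move=> r_gt0.
have u_ge0 : 0 <= (16 * r)^-1 by rewrite invr_ge0; lra.
apply: le_trans (indicator_le_expR _ _ u_ge0) _.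
by rewrite -!expRD le_eqVlt; apply/orP; left; apply/eqP; congr expR; field; lra.
Qed.

Lemma indicator_close_shift_ge S D l r : 0 < r ->
  indicator (`|S - l| <= r) * (1 - expR ((4 * r)^-1 * `|D|) / 9) <=
  indicator (`|S - D - l| <= 33 * r) :> R.
Proof.
move=> r_gt0; rewrite {1}/indicator.
case: (lerP `|S - l| r) => [close|_] /=; last by rewrite mulr0n mul0r indicator_ge0.
rewrite mulr1n mul1r; have [D_small|D_large] := lerP `|D| (32 * r).
  have close' : `|S - D - l| <= 33 * r.
    rewrite (_ : S - D - l = S - l - D); last by ring.
    by apply: le_trans (ler_normB _ _) _; lra.
  by rewrite /indicator close' /= mulr1n lerBlDr lerDl divr_ge0 ?expR_ge0.
have : 9 <= expR ((4 * r)^-1 * `|D|).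
  apply: le_trans (expR_ge1Dx _); rewrite -lerBlDl.
  by rewrite mulrC ler_pdivlMr; lra.
by have := indicator_ge0 R (`|S - D - l| <= 33 * r); lra.
Qed.

End PointwiseBounds.

Section Averaging.
Variable R : realType.

Lemma exists_ge_mean (T : finType) (w F : T -> R) :
  (forall x, 0 <= w x) -> \sum_x w x = 1 -> exists x, \sum_x w x * F x <= F x.
Proof.
move=> w_ge0 w_sum1; case: (pickP (xpredT : pred T)) => [x0 _|T0]; last first.
  by move/eqP: w_sum1; rewrite big_pred0 // eq_sym oner_eq0.
case: (@arg_maxP _ R T x0 xpredT F isT) => x _ F_max; exists x.
apply: le_trans (_ : \sum_x' w x' * F x <= _).
  by apply: ler_sum => x' _; apply: ler_wpM2l; [exact: w_ge0 | exact: F_max].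
by rewrite -mulr_suml w_sum1 mul1r.
Qed.

Lemma mean_mul_mixtures_le (I J E : finType) (pe : E -> R) (w1 : I -> R) (w2 : J -> R)
    (f1 : I -> E -> R) (f2 : J -> E -> R) (g1 : I -> R) (g2 : J -> R)
    (h : I -> J -> E -> R) (K : R) :
  (forall e, 0 <= pe e) -> (forall i, 0 <= w1 i) -> (forall j, 0 <= w2 j) ->
  (forall i, 0 <= g1 i) -> (forall j, 0 <= g2 j) ->
  (forall i j e, f1 i e * f2 j e <= g1 i * g2 j * h i j e) ->
  (forall i j, \sum_e pe e * h i j e <= K) ->
  \sum_e pe e * ((\sum_i w1 i * f1 i e) * (\sum_j w2 j * f2 j e)) <=
    K * (\sum_i w1 i * g1 i) * (\sum_j w2 j * g2 j).
Proof.
move=> pe_ge0 w1_ge0 w2_ge0 g1_ge0 g2_ge0 f_le h_le.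
pose c i j := w1 i * g1 i * (w2 j * g2 j).
have c_ge0 i j : 0 <= c i j by rewrite !mulr_ge0.
apply: le_trans (_ : \sum_e pe e * \sum_i \sum_j c i j * h i j e <= _).
  apply: ler_sum => e _; rewrite ler_wpM2l // mulr_suml; apply: ler_sum => i _.
  rewrite mulr_sumr; apply: ler_sum => j _.
  have -> : w1 i * f1 i e * (w2 j * f2 j e) = w1 i * w2 j * (f1 i e * f2 j e) by ring.
  have -> : c i j * h i j e = w1 i * w2 j * (g1 i * g2 j * h i j e) by rewrite /c; ring.
  by rewrite ler_wpM2l ?mulr_ge0.
have -> : \sum_e pe e * \sum_i \sum_j c i j * h i j e =
          \sum_i \sum_j c i j * \sum_e pe e * h i j e.
  under eq_bigr => e _ do rewrite mulr_sumr; rewrite exchange_big.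
  apply: eq_bigr => i _; under eq_bigr => e _ do rewrite mulr_sumr.
  rewrite exchange_big; apply: eq_bigr => j _; rewrite mulr_sumr.
  by apply: eq_bigr => e _; rewrite mulrCA.
rewrite -mulrA big_distrlr mulr_sumr; apply: ler_sum => i _.
rewrite mulr_sumr; apply: ler_sum => j _.
by rewrite [X in _ <= X]mulrC; apply: ler_wpM2l; [exact: c_ge0 | exact: h_le].
Qed.

End Averaging.

Lemma prob_close_round_withE (R : realType) n (p l t : R) (y : 'I_n -> R) e :
  prob_close p (fun i => (round_with y e i)%:~R) l t =
  \sum_b bern_weight p b *
    indicator (`|rsum y b - round_error_sum (frac_part y) b e - l| <= t).
Proof. by rewrite /prob_close sum_indicator; under eq_bigr do rewrite rsum_round_with. Qed.

Lemma prob_close_round_with_le (R : realType) n (p lam t : R) (y : 'I_n -> R) e :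
  0 <= p <= 1 ->
  prob_close p (fun i => (round_with y e i)%:~R) lam t <=
  prob_close p y lam (2 * t) +
  \sum_(b | `|rsum y b - lam| <= 2 * `|round_error_sum (frac_part y) b e|) bern_weight p b.
Proof.
move=> p01; apply: sum_le_sum_union => [b|b]; first exact: bern_weight_ge0.
rewrite rsum_round_with; set D := round_error_sum _ b e => close.
have tri : `|rsum y b - lam| <= `|rsum y b - D - lam| + `|D|.
  by rewrite {1}(_ : rsum y b - lam = rsum y b - D - lam + D) ?ler_normD //; ring.
by case: (lerP `|D| t) => D_le; apply/orP; [left | right]; lra.
Qed.

(* Chosen so that the error terms in the proof of [exists_good_rounding] add up to
   [rounding_const R * mu / 3]. *)
Definition rounding_const (R : realType) : R := 9 * 289 * 290 * expR (33 / 16).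

Section GoodRounding.
Variables (R : realType) (n : nat) (p L lam lam0 : R) (y : 'I_n -> R).
Local Notation r := (Num.sqrt n%:R : R).
Local Notation q := (frac_part y).
Local Notation w := (bern_weight p).
Local Notation err := (round_error_sum q).
Local Notation all1 := ([ffun => true] : {ffun 'I_n -> bool}).
Local Notation decay l b := (expR (- (`|rsum y b - l| / (16 * r)))).
Local Notation conc e := (prob_close p (fun i => (round_with y e i)%:~R) lam0 (33 * r)).
Local Notation bad e := (\sum_(b | `|rsum y b - lam| <= 2 * `|err b e|) w b).
Local Notation drift e := (expR ((16 * r)^-1 * `|err all1 e|)).
Local Notation small_ball := (forall t, r <= t -> prob_close p y lam t <= L * t).

Let pe_ge0 e : 0 <= bern_prod q e.
Proof. exact/bern_prod_ge0/frac_part_ge0_le1. Qed.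

Lemma sum_decay_le_levy : 0 <= p <= 1 -> (0 < n)%N ->
  \sum_b w b * decay lam0 b <= 289 * levy p y r.
Proof.
move=> p01 n_gt0; have r_gt0 : 0 < r by rewrite sqrtr_gt0 ltr0n.
apply: (@layer_cake_expR_le _ _ _ (fun b => `|rsum y b - lam0|)) => // [b|k].
  exact: bern_weight_ge0.
exact: (prob_close_le_levy_mul y p01 lam0 k (ltW r_gt0)).
Qed.

Lemma sum_decay_le_small_ball : 0 <= p <= 1 -> (0 < n)%N -> small_ball ->
  \sum_b w b * decay lam b <= 289 * (L * r).
Proof.
move=> p01 n_gt0 ball; have r_gt0 : 0 < r by rewrite sqrtr_gt0 ltr0n.
apply: (@layer_cake_expR_le _ _ _ (fun b => `|rsum y b - lam|)) => // [b|k].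
  exact: bern_weight_ge0.
by rewrite mulrCA; apply: ball; rewrite ler_peMl ?ler1n // ltW.
Qed.

Lemma mean_conc_ge : 0 <= p <= 1 -> (0 < n)%N ->
  2 / 3 * prob_close p y lam0 r <= \sum_e bern_prod q e * conc e.
Proof.
move=> p01 n_gt0; have r_gt0 : 0 < r by rewrite sqrtr_gt0 ltr0n.
pose near b := indicator (`|rsum y b - lam0| <= r) : R.
pose E b e := expR ((4 * r)^-1 * `|err b e|).
apply: le_trans (_ : \sum_e bern_prod q e * \sum_b w b * (near b * (1 - E b e / 9)) <= _).
  under eq_bigr do rewrite mulr_sumr; rewrite exchange_big /=.
  rewrite /prob_close sum_indicator mulr_sumr; apply: ler_sum => b _.
  have c_ge0 : 0 <= w b * near b by rewrite mulr_ge0 ?bern_weight_ge0 ?indicator_ge0.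
  have -> : \sum_e bern_prod q e * (w b * (near b * (1 - E b e / 9))) =
      w b * near b * (\sum_e bern_prod q e) -
      w b * near b / 9 * (\sum_e bern_prod q e * E b e).
    by rewrite !mulr_sumr -sumrB; apply: eq_bigr => e _; ring.
  rewrite sum_bern_prod; have := exp_abs_round_error_sum_le (frac_part_ge0_le1 y) b n_gt0.
  rewrite -/(E b _); nra.
apply: ler_sum => e _; apply: ler_wpM2l; first exact: pe_ge0.
rewrite prob_close_round_withE; apply: ler_sum => b _; apply: ler_wpM2l.
  exact: bern_weight_ge0.
exact: indicator_close_shift_ge.
Qed.

Lemma mean_exp_err_pair_le b b' (k k' : R) : (0 < n)%N -> 8 <= k -> 8 <= k' ->
  \sum_e bern_prod q e *
    (expR ((k * r)^-1 * `|err b e|) * expR ((k' * r)^-1 * `|err b' e|)) <= 3.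
Proof.
move=> n_gt0 k_ge k'_ge; have r_gt0 : 0 < r by rewrite sqrtr_gt0 ltr0n.
apply: (exp_abs_round_error_sum2_le (frac_part_ge0_le1 y)) => //.
- by rewrite invr_ge0 mulr_ge0 // ?ltW //; lra.
- by rewrite invr_ge0 mulr_ge0 // ?ltW //; lra.
- rewrite !invfM mulrA; apply: ler_wpM2r; first by rewrite invr_ge0 ltW.
  by rewrite ler_pdivrMr; lra.
- rewrite !invfM mulrA; apply: ler_wpM2r; first by rewrite invr_ge0 ltW.
  by rewrite ler_pdivrMr; lra.
Qed.

Lemma mean_conc_bad_le : 0 <= p <= 1 -> (0 < n)%N -> small_ball ->
  \sum_e bern_prod q e * (conc e * bad e) <=
  3 * expR (33 / 16) * (289 * levy p y r) * 289 * (L * r).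
Proof.
move=> p01 n_gt0 ball; have r_gt0 : 0 < r by rewrite sqrtr_gt0 ltr0n.
have w_ge0 (b : {ffun 'I_n -> bool}) : 0 <= w b by exact: bern_weight_ge0.
have conc_bad e : conc e * bad e =
    (\sum_b w b * indicator (`|rsum y b - err b e - lam0| <= 33 * r)) *
    (\sum_b w b * indicator (`|rsum y b - lam| <= 2 * `|err b e|)).
  by rewrite prob_close_round_withE; congr (_ * _); rewrite sum_indicator.
have pointwise b b' e :
    indicator (`|rsum y b - err b e - lam0| <= 33 * r) *
    indicator (`|rsum y b' - lam| <= 2 * `|err b' e|) <=
    expR (33 / 16) * decay lam0 b * decay lam b' *
    (expR ((16 * r)^-1 * `|err b e|) * expR ((8 * r)^-1 * `|err b' e|)).
  apply: le_trans (ler_pM (indicator_ge0 _ _) (indicator_ge0 _ _)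
    (indicator_shifted_close_le _ _ _ r_gt0) (indicator_close_le_err _ _ _ r_gt0)) _.
  by rewrite mulrACA.
under eq_bigr do rewrite conc_bad.
have le_8_16 : 8 <= 16 :> R by lra.
have mean_pair b b' := mean_exp_err_pair_le b b' n_gt0 le_8_16 (lexx 8).
apply: le_trans (mean_mul_mixtures_le pe_ge0 w_ge0 w_ge0 _ _ pointwise mean_pair) _.
- by move=> b; rewrite mulr_ge0 ?expR_ge0.
- by move=> b; rewrite expR_ge0.
have sum_decay_ge0 l : 0 <= \sum_b w b * decay l b.
  by apply: sumr_ge0 => b _; rewrite mulr_ge0 ?expR_ge0.
under [X in 3 * X * _ <= _]eq_bigr do rewrite mulrCA.
rewrite -mulr_sumr [in X in X <= _]mulrA -[X in _ <= X]mulrA; apply: ler_pM.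
- by rewrite !mulr_ge0 ?expR_ge0.
- exact: sum_decay_ge0.
- by rewrite ler_wpM2l ?mulr_ge0 ?expR_ge0 ?sum_decay_le_levy.
- exact: sum_decay_le_small_ball.
Qed.

Lemma mean_conc_drift_le : 0 <= p <= 1 -> (0 < n)%N ->
  \sum_e bern_prod q e * (conc e * drift e) <= 3 * expR (33 / 16) * (289 * levy p y r).
Proof.
move=> p01 n_gt0; have r_gt0 : 0 < r by rewrite sqrtr_gt0 ltr0n.
have w_ge0 (b : {ffun 'I_n -> bool}) : 0 <= w b by exact: bern_weight_ge0.
(* The drift, not random in [b], is written as a trivial mixture over [b]. *)
have conc_drift e : conc e * drift e =
    (\sum_b w b * indicator (`|rsum y b - err b e - lam0| <= 33 * r)) *
    (\sum_(b : {ffun 'I_n -> bool}) w b * drift e).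
  by rewrite prob_close_round_withE -mulr_suml sum_bern_weight mul1r.
have pointwise b (b' : {ffun 'I_n -> bool}) e :
    indicator (`|rsum y b - err b e - lam0| <= 33 * r) * drift e <=
    expR (33 / 16) * decay lam0 b * 1 *
    (expR ((16 * r)^-1 * `|err b e|) * expR ((16 * r)^-1 * `|err all1 e|)).
  by rewrite mulr1 mulrA ler_wpM2r ?expR_ge0 ?indicator_shifted_close_le.
have le_8_16 : 8 <= 16 :> R by lra.
have mean_pair b (b' : {ffun 'I_n -> bool}) :=
  mean_exp_err_pair_le b all1 n_gt0 le_8_16 le_8_16.
under eq_bigr do rewrite conc_drift.
apply: le_trans (mean_mul_mixtures_le pe_ge0 w_ge0 w_ge0 _ _ pointwise mean_pair) _.
- by move=> b; rewrite mulr_ge0 ?expR_ge0.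
- by [].
under [X in _ * X]eq_bigr do rewrite mulr1.
under [X in 3 * X * _ <= _]eq_bigr do rewrite mulrCA.
rewrite sum_bern_weight mulr1 -mulr_sumr [in X in X <= _]mulrA.
by rewrite ler_wpM2l ?mulr_ge0 ?expR_ge0 ?sum_decay_le_levy.
Qed.

Lemma exists_good_rounding : 0 <= p <= 1 -> (0 < n)%N -> 0 < L -> small_ball ->
    levy p y r / 2 < prob_close p y lam0 r ->
  exists e, levy p y r / 6 < conc e /\ bad e / (L * r) + drift e < 2 * rounding_const R.
Proof.
move=> p01 n_gt0 L_gt0 ball near_max.
have r_gt0 : 0 < r by rewrite sqrtr_gt0 ltr0n.
have Lr_gt0 : 0 < L * r by rewrite mulr_gt0.
have mu_gt0 : 0 < levy p y r by have := prob_close_le_levy y p01 lam0 r; lra.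
set A := rounding_const R; set mu := levy p y r in mu_gt0 near_max *.
have A_gt0 : 0 < A by rewrite !mulr_gt0 ?expR_gt0.
pose F e := conc e * (2 * A - (bad e / (L * r) + drift e)).
have mean_F : A * mu / 3 < \sum_e bern_prod q e * F e.
  have -> : \sum_e bern_prod q e * F e =
      2 * A * (\sum_e bern_prod q e * conc e) -
      (\sum_e bern_prod q e * (conc e * bad e)) / (L * r) -
      \sum_e bern_prod q e * (conc e * drift e).
    by rewrite mulr_sumr mulr_suml -!sumrB; apply: eq_bigr => e _; rewrite /F; ring.
  have bad_term : (\sum_e bern_prod q e * (conc e * bad e)) / (L * r) <=
      3 * expR (33 / 16) * (289 * mu) * 289.
    by rewrite ler_pdivrMr //; exact: mean_conc_bad_le.
  have := mean_conc_drift_le p01 n_gt0; rewrite -/mu.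
  have := ler_wpM2l (ltW A_gt0) (mean_conc_ge p01 n_gt0).
  have := near_max; rewrite -(ltr_pM2l A_gt0).
  have A_mu : A * mu = 9 * 289 * 290 * (expR (33 / 16) * mu).
    by rewrite /A /rounding_const; ring.
  rewrite mulrA A_mu; lra.
have [e F_ge] := exists_ge_mean F pe_ge0 (sum_bern_prod q).
have conc_ge0 : 0 <= conc e by exact: prob_close_ge0.
have bad_ge0 : 0 <= bad e / (L * r).
  by rewrite divr_ge0 ?sumr_ge0 // ?ltW // => b _; exact: bern_weight_ge0.
have drift_ge0 : 0 <= drift e by exact: expR_ge0.
have A_mu_gt0 : 0 < A * mu by rewrite mulr_gt0.
by exists e; rewrite /F in F_ge; split; nra.
Qed.

Lemma exists_rounding_props : 0 <= p <= 1 -> (0 < n)%N -> 0 < L -> small_ball ->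
    levy p y r / 2 < prob_close p y lam0 r ->
  exists e, [/\ forall t, r <= t ->
      prob_close p (fun i => (round_with y e i)%:~R) lam t <=
      (2 + 32 * rounding_const R) * L * t,
    levy p y r / 198 <= levy p (fun i => (round_with y e i)%:~R) r &
    `|err all1 e| <= (2 + 32 * rounding_const R) * r].
Proof.
move=> p01 n_gt0 L_gt0 ball near_max.
have r_gt0 : 0 < r by rewrite sqrtr_gt0 ltr0n.
have [e [conc_gt good]] := exists_good_rounding p01 n_gt0 L_gt0 ball near_max.
set A := rounding_const R in good *.
have A_gt0 : 0 < A by rewrite !mulr_gt0 ?expR_gt0.
have bad_le : bad e <= 2 * A * (L * r).
  rewrite -ler_pdivrMr ?mulr_gt0 //; have := expR_ge0 ((16 * r)^-1 * `|err all1 e|); lra.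
have drift_lt : drift e < 2 * A.
  have : 0 <= bad e / (L * r).
    by rewrite divr_ge0 ?sumr_ge0 ?mulr_ge0 ?ltW // => b _; exact: bern_weight_ge0.
  lra.
exists e; split.
- move=> t r_le_t; apply: le_trans (@prob_close_round_with_le _ _ p lam t y e p01) _.
  have ball2 : prob_close p y lam (2 * t) <= L * (2 * t) by apply: ball; lra.
  have Lr_le : A * (L * r) <= A * (L * t).
    by apply: ler_wpM2l; [exact: ltW | apply: ler_wpM2l; [exact: ltW | exact: r_le_t]].
  have t_gt0 : 0 < t by lra.
  have : 0 < A * (L * t) by do 2 apply: mulr_gt0 => //.
  lra.
- have conc_le : conc e <= 33 * levy p (fun i => (round_with y e i)%:~R) r :=
    prob_close_le_levy_mul _ p01 lam0 32 (ltW r_gt0).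
  lra.
- have : (16 * r)^-1 * `|err all1 e| <= drift e.
    by have := expR_ge1Dx ((16 * r)^-1 * `|err all1 e|); lra.
  rewrite ler_pdivrMl ?mulr_gt0 // => err_le.
  have : 16 * r * drift e <= 16 * r * (2 * A).
    by apply: ler_wpM2l; [rewrite mulr_ge0 // ltW | exact: ltW].
  lra.
Qed.

End GoodRounding.

Theorem lemma5p2 :
  exists C c : Rdefinitions.R, 0 < C /\ 0 < c /\
  forall (n : nat) (p : Rdefinitions.R) (y : 'I_n -> Rdefinitions.R)
         (L lam : Rdefinitions.R),
    0 < p -> p <= 2^-1 -> 0 < L ->
    (forall t : Rdefinitions.R, Num.sqrt n%:R <= t -> prob_close p y lam t <= L * t) ->
    exists y' : 'I_n -> int,
      (forall i : 'I_n, `|y i - (y' i)%:~R| <= 1) /\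
      (forall t : Rdefinitions.R, Num.sqrt n%:R <= t ->
          prob_close p (fun i => (y' i)%:~R) lam t <= C * L * t) /\
      levy p (fun i => (y' i)%:~R) (Num.sqrt n%:R) >= c * levy p y (Num.sqrt n%:R) /\
      `|\sum_(i < n) y i - \sum_(i < n) (y' i)%:~R| <= C * Num.sqrt n%:R.
Proof.
have A_gt0 : 0 < rounding_const Rdefinitions.R by rewrite !mulr_gt0 ?expR_gt0.
exists (2 + 32 * rounding_const _), 198^-1; split; first lra.
split=> [|n p y L lam p_gt0 p_le L_gt0 ball]; first by rewrite invr_gt0.
have p01 : 0 <= p <= 1 by apply/andP; split; lra.
have levy_pos : 0 < levy p y (Num.sqrt n%:R).
  by apply: levy_gt0 => //; [apply/andP; split; lra | exact: sqrtr_ge0].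
have err_le1 e i : `|y i - (round_with y e i)%:~R| <= 1.
  by rewrite round_withE opprB addrC subrK (norm_round_error_le1 (frac_part_ge0_le1 y)).
case: (posnP n) => [n0 | n_gt0].
  subst n; exists (round_with y [ffun => false]); split=> //.
  have -> : (fun i => (round_with y [ffun => false] i)%:~R) = y by apply/funext => -[].
  rewrite !big_ord0 subrr normr0 sqrtr0 mulr0; split=> [t t_ge0|]; last split=> //.
    move: (ball t); rewrite sqrtr0 => /(_ t_ge0) /le_trans; apply.
    by rewrite -mulrA ler_peMl ?mulr_ge0 ?(ltW L_gt0) //; lra.
  by move: levy_pos; rewrite sqrtr0; lra.
have [lam0 near_max] := exists_prob_close_gt_half_levy p01 levy_pos.
have [e [ball' levy' err']] := exists_rounding_props p01 n_gt0 L_gt0 ball near_max.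
exists (round_with y e); split=> //; split; first exact: ball'.
by rewrite mulrC sum_sub_round_with.
Qed.
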